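(* Let $q\geq 3$ be odd, $x\in(0,1)$, and $\varepsilon>0$ with $V_\varepsilon:=(x-\varepsilon/2,x+\varepsilon/2)\subseteq(0,1)$. (i) For all $n\in\mathbb{N}$ and all $h\in W_{q,n}$, \[ \Big|\frac{m(h.V_\varepsilon)}{\mu(V_\varepsilon)}-x|h'(x)|\Big|\leq\Big(\Big|\frac{\varepsilon}{\mu(V_\varepsilon)}-x\Big|+\frac{\varepsilon}{x}\Big)\frac{m(h.V_\varepsilon)}{\varepsilon}. \] (ii) There exists $M>0$ (depending only on $x$, $\varepsilon$, $q$) such that for all $y\in(0,1]$, all $n\in\mathbb{N}$ and all $h\in W_{q,n}$ with $y\in h.V_\varepsilon$, \[ \Big|\frac{m(h.V_\varepsilon\cap(0,y])}{\mu(V_\varepsilon)}-x|h'(x)|\,\delta_{h.x}((0,y])\Big|\leq\frac{M}{n^2}. \]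
   Context: Let $\lambda=2\cos(\pi/q)$. Elements of $\mathrm{PGL}_2(\mathbb{R})$ are written as matrices (up to nonzero scalar) and act on $\mathbb{R}\cup\{\infty\}$ by $\begin{bmatrix}a&b\\c&d\end{bmatrix}.x=(ax+b)/(cx+d)$. Put $s(x)=\sin(x\pi/q)/\sin(\pi/q)$, $g_k=\begin{bmatrix}s(k)&-s(k+1)\\-s(k-1)&s(k)\end{bmatrix}$, $Q=\begin{bmatrix}0&1\\1&0\end{bmatrix}$, $K=\{(q+1)/2,\dots,q-1\}$, $\Lambda_q=\{g_k^{-1},(Qg_k)^{-1}:k\in K\}$; $W_{q,n}$ denotes the set of words of length $n$ over $\Lambda_q$ (products of $n$ elements of $\Lambda_q$ in the free semigroup they generate). For $h\in\mathrm{PGL}_2(\mathbb{R})$, $h'$ is the derivative of $x\mapsto h.x$, and $h.V$ is the image of a set $V$. $m$ is Lebesgue measure, $\mu$ the measure with density $1/t$ with respect to $m$ (so $\mu(V_\varepsilon)=\log\frac{x+\varepsilon/2}{x-\varepsilon/2}$), and $\delta_z$ the Dirac measure at $z$. *)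

From HB Require Import structures.
From mathcomp Require Import all_boot all_order all_algebra.
From mathcomp Require Import all_classical all_reals all_analysis.
Set Implicit Arguments. Unset Strict Implicit. Unset Printing Implicit Defensive.
Import Order.TTheory GRing.Theory Num.Theory.
Local Open Scope classical_set_scope.
Local Open Scope ring_scope.

Section Defs.
Variable R : realType.

Definition mx2 (a b c d : R) : 'M[R]_2 :=
  \matrix_(i < 2, j < 2)
    if i == ord0 then (if j == ord0 then a else b) else (if j == ord0 then c else d).

(* Moebius action of a matrix (= its class in PGL_2(R)) on R *)
Definition mob (A : 'M[R]_2) (x : R) : R :=
  (A ord0 ord0 * x + A ord0 ord_max) / (A ord_max ord0 * x + A ord_max ord_max).

Definition mob_img (A : 'M[R]_2) (V : set R) : set R := mob A @` V.

Definition sq (q : nat) (x : R) : R := sin (x * pi / q%:R) / sin (pi / q%:R).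

Definition gk (q k : nat) : 'M[R]_2 :=
  mx2 (sq q k%:R) (- sq q (k.+1)%:R) (- sq q (k.-1)%:R) (sq q k%:R).

Definition Qmx : 'M[R]_2 := mx2 0 1 1 0.

Definition Kset (q k : nat) : Prop := ((q.+1)./2 <= k)%N /\ (k <= q.-1)%N.

Definition Lam (q : nat) : set 'M[R]_2 :=
  [set A | exists k, Kset q k /\ (A = invmx (gk q k) \/ A = invmx (Qmx *m gk q k))].

Definition Wq (q n : nat) : set 'M[R]_2 :=
  [set h | exists s : seq 'M[R]_2,
     size s = n /\ (forall A, A \in s -> Lam q A) /\ h = foldr (@mulmx R 2 2 2) 1%:M s].

Definition Veps (x eps : R) : set R := `](x - eps / 2), (x + eps / 2)[%classic.

(* mu(V_eps), mu having density 1/t w.r.t. Lebesgue measure *)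
Definition muV (x eps : R) : R := ln ((x + eps / 2) / (x - eps / 2)).

Definition leb (A : set R) : \bar R := (@lebesgue_measure R A).

End Defs.

(* Every word h of W_{q,n} is a matrix [a b; c d] with nonnegative entries,
   |det h| = 1, d >= 1 and c + d >= n + 1.  Indeed the generators of Lambda_q
   are the explicit inverses [s_k s_{k+1}; s_{k-1} s_k] and
   [s_{k+1} s_k; s_k s_{k-1}] with 2 <= k < q, whose determinant is +-1 by
   s_k^2 - s_{k+1} s_{k-1} = 1 and whose entries are >= 0 (the relevant ones
   >= 1), and these properties propagate along products.  On V_eps the Moebius
   map of h is then strictly monotone, so h.V_eps is an open interval of length
   eps / (P Q) with P, Q = c (x -+ eps/2) + d, while |h'(x)| = 1 / X^2 with
   X = c x + d.  As P Q = X^2 - (c eps / 2)^2, part (i) is the triangle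
   inequality.  For part (ii), P, Q >= (x - eps/2) n and X >= x n make both
   terms O(1 / n^2). *)

From HB Require Import structures.
From mathcomp Require Import all_boot all_order all_algebra.
From mathcomp Require Import all_classical all_reals all_analysis.
From mathcomp Require Import unstable ring lra.
Import Order.TTheory GRing.Theory Num.Def Num.Theory numFieldNormedType.Exports.
Set Implicit Arguments. Unset Strict Implicit. Unset Printing Implicit Defensive.
Local Open Scope classical_set_scope.
Local Open Scope ring_scope.

Section Matrix2.
Variable R : realType.
Implicit Types (a b c d : R) (A B : 'M[R]_2).

Lemma mx2_eta A :
  A = mx2 (A ord0 ord0) (A ord0 ord_max) (A ord_max ord0) (A ord_max ord_max).
Proof.
apply/matrixP => i j; rewrite !mxE.
by case: i => [[|[|i]] Hi]; case: j => [[|[|j]] Hj] //=; congr (A _ _); apply: val_inj.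
Qed.

Lemma mul_mx2 a b c d a' b' c' d' :
  mx2 a b c d *m mx2 a' b' c' d' =
  mx2 (a * a' + b * c') (a * b' + b * d') (c * a' + d * c') (c * b' + d * d').
Proof.
apply/matrixP => i j; rewrite !mxE big_ord_recr big_ord1 /= !mxE.
by case: i => [[|[|i]] Hi]; case: j => [[|[|j]] Hj].
Qed.

Lemma mx2_1 : 1%:M = mx2 1 0 0 1 :> 'M[R]_2.
Proof.
apply/matrixP => i j; rewrite !mxE.
by case: i => [[|[|i]] Hi]; case: j => [[|[|j]] Hj].
Qed.

Lemma det_mx2 a b c d : \det (mx2 a b c d) = a * d - b * c.
Proof.
rewrite (expand_det_row _ ord0) big_ord_recr big_ord1 /cofactor !det_mx11 /= !mxE /=.
by rewrite !expr0 !expr1; ring.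
Qed.

Lemma det_mx2E A :
  \det A = A ord0 ord0 * A ord_max ord_max - A ord0 ord_max * A ord_max ord0.
Proof. by rewrite {1}(mx2_eta A) det_mx2. Qed.

Lemma invmx_right A B : A *m B = 1%:M -> invmx A = B.
Proof.
move=> AB; have [uA _] := mulmx1_unit AB.
by rewrite -[invmx A]mulmx1 -AB mulmxA mulVmx // mul1mx.
Qed.
End Matrix2.

Section Sines.
Variables (R : realType) (q : nat).
Hypothesis q_ge2 : (2 <= q)%N.
Let th : R := pi / q%:R.

Let q_gt0 : (0 : R) < q%:R. Proof. by rewrite ltr0n; case: q q_ge2. Qed.
Let th_gt0 : 0 < th. Proof. by rewrite divr_gt0 // pi_gt0. Qed.
Let pi_eq : pi = q%:R * th. Proof. by rewrite /th mulrC divfK // gt_eqF. Qed.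
Let q_ge2R : (2 : R) <= q%:R. Proof. by rewrite (ler_nat R 2 q). Qed.

Let sqE (j : R) : sq q j = sin (j * th) / sin th.
Proof. by rewrite /sq /th mulrA. Qed.

Let sin_th_gt0 : 0 < sin th.
Proof.
apply: sin_gt0_pi; rewrite th_gt0 /=.
have := pi_gt0 R; have := pi_eq; have := q_ge2R; have := th_gt0; nra.
Qed.

Lemma sq_ge0 (j : R) : 0 <= j <= q%:R -> 0 <= sq q j.
Proof.
move=> /andP[j0 jq]; rewrite sqE divr_ge0 ?(ltW sin_th_gt0) //.
apply: sin_ge0_pi; have := pi_eq; have := th_gt0 => th0 piE.
by apply/andP; split; nra.
Qed.

Lemma sq_ge1 (j : R) : 1 <= j <= q%:R - 1 -> 1 <= sq q j.
Proof.
move=> /andP[j1 jq]; rewrite sqE ler_pdivlMr // mul1r -subr_ge0.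
set u := (j + 1) * th / 2; set v := (j - 1) * th / 2.
have -> : j * th = u + v by rewrite /u /v; field.
have -> : th = u - v by rewrite /u /v; field.
rewrite sinD sinB.
have -> : sin u * cos v + cos u * sin v - (sin u * cos v - cos u * sin v) =
  2 * (cos u * sin v) by ring.
have := pi_eq; have := th_gt0 => th0 piE.
rewrite mulr_ge0 // mulr_ge0 //.
  by apply: cos_ge0_pihalf; rewrite /u; apply/andP; split; nra.
by apply: sin_ge0_pi; rewrite /v; apply/andP; split; nra.
Qed.

Lemma sqr_sq_subDB (j : R) : sq q j ^+ 2 - sq q (j + 1) * sq q (j - 1) = 1.
Proof.
rewrite !sqE mulrDl mulrBl mul1r; set A := j * th.
have sinA2 : sin A ^+ 2 - sin (A + th) * sin (A - th) = sin th ^+ 2.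
  apply/eqP; rewrite -subr_eq0 sinD sinB; apply/eqP.
  transitivity (sin A ^+ 2 * (1 - (cos th ^+ 2 + sin th ^+ 2)) +
                sin th ^+ 2 * (cos A ^+ 2 + sin A ^+ 2 - 1)); first ring.
  by rewrite !cos2Dsin2; ring.
have sin_th_neq0 : sin th != 0 by rewrite gt_eqF.
rewrite -[RHS](divff (expf_neq0 2 sin_th_neq0)) -{1}sinA2.
by field.
Qed.
End Sines.

Lemma continuous_strict_mono_image_itvoo (R : realType) (a b : R) (f : R -> R) :
    a < b -> strict_monotonic `[a, b] f -> {within `[a, b]%classic, continuous f} ->
  f @` `]a, b[ = (f @`]a, b[)%classic.
Proof.
move=> ab fmono fcont; apply/seteqP; split => [_ [t tab <-] | y].
  by apply: mono_mem_image_itvoo => //; rewrite inE.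
rewrite /= => yab.
have [t tab fty] := segment_continuous_surjective (ltW ab) fcont
  (subset_itv_oo_cc yab).
have [ta tb] : t != a /\ t != b.
  by split; apply/eqP => ht; move: yab;
    rewrite -fty ht in_itv /= gt_min lt_max ltxx /= ?orbF; case: ltgtP.
by exists t => //; rewrite /= in_itv /= !lt_neqAle eq_sym ta tb !(itvP tab).
Qed.

Lemma itvoo_subset_bounds (R : realFieldType) (a b u v : R) :
  a < b -> `]a, b[%classic `<=` `]u, v[%classic -> u <= a /\ b <= v.
Proof.
move=> ab sub; have mem t : a < t < b -> u < t < v.
  by move=> tab; have := sub t; rewrite /= !in_itv /=; apply.
split; rewrite leNgt; apply/negP.
- move=> au; have am : a < minr u b by rewrite lt_min au ab.
  have mu : minr u b <= u by rewrite ge_min lexx.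
  have mb : minr u b <= b by rewrite ge_min lexx orbT.
  have t_in : a < (a + minr u b) / 2 < b by apply/andP; split; lra.
  by have /andP[ut _] := mem _ t_in; lra.
- move=> vb; have ma : a <= maxr a v by rewrite le_max lexx.
  have mv : maxr a v < b by rewrite gt_max ab vb.
  have vm : v <= maxr a v by rewrite le_max lexx orbT.
  have t_in : a < (maxr a v + b) / 2 < b by apply/andP; split; lra.
  by have /andP[_ tv] := mem _ t_in; lra.
Qed.

Lemma setI_itvoo_itvoc (R : realType) (a b u y : R) :
  u <= a -> y < b -> `]a, b[ `&` `]u, y] = `]a, y]%classic.
Proof.
move=> ua yb; apply/seteqP; split => t /=; rewrite !in_itv /=.
  by case=> /andP[a_t _] /andP[_ t_y]; rewrite a_t t_y.
move=> /andP[a_t t_y]; split; apply/andP; split => //.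
  exact: le_lt_trans t_y yb.
exact: le_lt_trans ua a_t.
Qed.

Lemma leb_itv (R : realType) (a b : R) (l r : bool) :
  a < b -> leb [set` Interval (BSide l a) (BSide r b)] = (b - a)%:E.
Proof.
by move=> ab; case: l r => [] []; rewrite /leb lebesgue_measure_itv /= lte_fin ab -EFinB.
Qed.

Section Mobius.
Variables (R : realType) (A : 'M[R]_2).
Local Notation a := (A ord0 ord0).
Local Notation b := (A ord0 ord_max).
Local Notation c := (A ord_max ord0).
Local Notation d := (A ord_max ord_max).

Lemma mob_sub s t : c * s + d != 0 -> c * t + d != 0 ->
  mob A t - mob A s = \det A * (t - s) / ((c * t + d) * (c * s + d)).
Proof. by move=> s_neq0 t_neq0; rewrite /mob det_mx2E; field; rewrite s_neq0 t_neq0. Qed.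

Lemma is_derive_mob t : c * t + d != 0 ->
  is_derive t 1 (mob A) (\det A / (c * t + d) ^+ 2).
Proof.
move=> t_neq0.
have num : is_derive t 1 (fun u => a * u + b) a.
  by apply: is_derive_eq; rewrite addr0 /GRing.scale /= mulr1.
have den : is_derive t 1 (fun u => c * u + d) c.
  by apply: is_derive_eq; rewrite addr0 /GRing.scale /= mulr1.
have -> : mob A = (fun u => a * u + b) * (fun u => (c * u + d)^-1) by [].
apply: is_derive_eq (is_deriveM num (@is_deriveV _ _ t _ _ t_neq0 den)) _.
by rewrite det_mx2E /GRing.scale /=; field.
Qed.

Lemma derive1_mob t : c * t + d != 0 ->
  derive1 (mob A) t = \det A / (c * t + d) ^+ 2.
Proof. by move=> /is_derive_mob dmob; rewrite derive1E derive_val. Qed.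

Variables lo hi : R.
Hypotheses (lo_lt_hi : lo < hi) (det_neq0 : \det A != 0).
Hypothesis denom_gt0 : {in `[lo, hi], forall t, 0 < c * t + d}.

Lemma mob_strict_mono : strict_monotonic `[lo, hi] (mob A).
Proof.
have mobB s t : s \in `[lo, hi] -> t \in `[lo, hi] ->
    mob A t - mob A s = \det A * (t - s) / ((c * t + d) * (c * s + d)).
  by move=> /denom_gt0/lt0r_neq0 ? /denom_gt0/lt0r_neq0 ?; rewrite mob_sub.
have denom2_gt0 s t : s \in `[lo, hi] -> t \in `[lo, hi] ->
    0 < (c * t + d) * (c * s + d).
  by move=> /denom_gt0 ? /denom_gt0 ?; rewrite mulr_gt0.
case: (ltgtP 0 (\det A)) => [det_gt0 | det_lt0 | det0]; [left | right | ].
- move=> s t s_in t_in st; rewrite -subr_gt0 mobB // divr_gt0 ?denom2_gt0 //.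
  by rewrite mulr_gt0 // subr_gt0.
- move=> s t s_in t_in st; rewrite -subr_gt0 mobB // divr_gt0 ?denom2_gt0 //.
  by rewrite nmulr_rgt0 // subr_lt0.
- by move: det_neq0; rewrite -det0 eqxx.
Qed.

Lemma mob_continuous : {within `[lo, hi]%classic, continuous (mob A)}.
Proof.
apply: derivable_within_continuous => t /denom_gt0/lt0r_neq0 t_neq0.
by have := @is_derive_mob t t_neq0.
Qed.

Lemma mob_img_itvoo : mob_img A `]lo, hi[ = ((mob A) @`]lo, hi[)%classic.
Proof.
exact: continuous_strict_mono_image_itvoo lo_lt_hi mob_strict_mono mob_continuous.
Qed.

Lemma mob_img_length :
  maxr (mob A lo) (mob A hi) - minr (mob A lo) (mob A hi) =
  `|\det A| * (hi - lo) / ((c * lo + d) * (c * hi + d)).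
Proof.
have P_gt0 : 0 < c * lo + d by rewrite denom_gt0 // in_itv /= lexx ltW.
have Q_gt0 : 0 < c * hi + d by rewrite denom_gt0 // in_itv /= lexx ltW.
have -> : maxr (mob A lo) (mob A hi) - minr (mob A lo) (mob A hi) =
    `|mob A hi - mob A lo|.
  case: leP => [lohi | /ltW hilo]; first by rewrite ger0_norm // subr_ge0.
  by rewrite distrC ger0_norm // subr_ge0.
rewrite mob_sub ?lt0r_neq0 // normrM normfV (gtr0_norm (mulr_gt0 Q_gt0 P_gt0)).
rewrite normrM (gtr0_norm (_ : 0 < hi - lo)) ?subr_gt0 //.
by rewrite [(c * hi + d) * _]mulrC.
Qed.
End Mobius.

Section Words.
Variable R : realType.

Definition nonneg_mx m n (A : 'M[R]_(m, n)) : Prop := forall i j, 0 <= A i j.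

Lemma nonneg_mulmx m n p (A : 'M[R]_(m, n)) (B : 'M[R]_(n, p)) :
  nonneg_mx A -> nonneg_mx B -> nonneg_mx (A *m B).
Proof. by move=> A_ge0 B_ge0 i j; rewrite mxE sumr_ge0 // => k _; rewrite mulr_ge0. Qed.

Lemma nonneg_mx2 (a b c d : R) :
  0 <= a -> 0 <= b -> 0 <= c -> 0 <= d -> nonneg_mx (mx2 a b c d).
Proof. by move=> a0 b0 c0 d0 i j; rewrite mxE; do 2!case: ifP. Qed.

Definition generator_bounds (A : 'M[R]_2) : Prop :=
  [/\ nonneg_mx A, 1 <= A ord0 ord0 + A ord0 ord_max,
      1 <= A ord_max ord0 & 1 <= A ord_max ord_max].

Definition word_bounds (n : nat) (A : 'M[R]_2) : Prop :=
  [/\ nonneg_mx A, 1 <= A ord0 ord0 + A ord0 ord_max,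
      1 <= A ord_max ord_max & n.+1%:R <= A ord_max ord0 + A ord_max ord_max].

Lemma word_bounds1 : word_bounds 0 1%:M.
Proof.
rewrite /word_bounds mx2_1 !mxE /=; split; rewrite ?addr0 ?add0r //.
exact: nonneg_mx2.
Qed.

Lemma word_bounds_step (al be ga de a b c d N : R) :
    0 <= al -> 0 <= be -> 1 <= al + be -> 1 <= ga -> 1 <= de ->
    0 <= b -> 1 <= a + b -> 1 <= d -> 1 <= N -> N <= c + d ->
  [/\ 1 <= al * a + be * c + (al * b + be * d), 1 <= ga * b + de * d
     & N + 1 <= ga * a + de * c + (ga * b + de * d)].
Proof.
move=> al0 be0 albe1 ga1 de1 b0 ab1 d1 N1 Ncd.
have ga0 := le_trans ler01 ga1; have cd1 := le_trans N1 Ncd.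
have h1 : 0 <= al * (a + b - 1) by rewrite mulr_ge0 // subr_ge0.
have h2 : 0 <= be * (c + d - 1) by rewrite mulr_ge0 // subr_ge0.
have h3 : 0 <= ga * b by rewrite mulr_ge0.
have h4 : 0 <= (de - 1) * (d - 1) by rewrite mulr_ge0 // subr_ge0.
have h5 : 0 <= ga * (a + b - 1) by rewrite mulr_ge0 // subr_ge0.
have h6 : 0 <= (de - 1) * (c + d) by rewrite mulr_ge0 ?subr_ge0 // (le_trans ler01 cd1).
move: h1 h2 h4 h5 h6; rewrite !(mulrBr, mulrBl, mulrDr, mulrDl, mulr1, mul1r).
by split; lra.
Qed.

Lemma word_boundsM n (A B : 'M[R]_2) :
  generator_bounds A -> word_bounds n B -> word_bounds n.+1 (A *m B).
Proof.
case=> A_ge0 ab1 ga1 de1 [B_ge0 ab1' d1 cd_ge].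
have n1 : 1 <= n.+1%:R :> R by rewrite ler1n.
have [ab_ge1 d_ge1 cd_ge1] := word_bounds_step (A_ge0 ord0 ord0)
  (A_ge0 ord0 ord_max) ab1 ga1 de1 (B_ge0 ord0 ord_max) ab1' d1 n1 cd_ge.
split; first exact: nonneg_mulmx.
all: by rewrite (mx2_eta A) (mx2_eta B) mul_mx2 !mxE /= -?[n.+2%:R]natr1.
Qed.

Variable q : nat.
Hypothesis q_ge3 : (3 <= q)%N.

Local Notation s k := (sq q (k%:R : R)).

Lemma sqr_sq_subSP k : (0 < k)%N -> s k ^+ 2 - s k.+1 * s k.-1 = 1.
Proof.
move=> k_gt0; have -> : k.-1%:R = k%:R - 1 :> R by rewrite -subn1 natrB.
by rewrite -natr1 sqr_sq_subDB // ltnW.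
Qed.

Lemma Lam_mx2 (A : 'M[R]_2) : Lam q A -> exists2 k, (2 <= k < q)%N &
  A = mx2 (s k) (s k.+1) (s k.-1) (s k) \/ A = mx2 (s k.+1) (s k) (s k) (s k.-1).
Proof.
move=> [k [[k_ge k_le] A_eq]].
have k_ge2 : (2 <= k)%N := leq_trans (half_leq (q_ge3 : (4 <= q.+1)%N)) k_ge.
exists k; first by rewrite k_ge2 (leq_ltn_trans k_le) // ltn_predL (ltnW (ltnW q_ge3)).
have sk2 := sqr_sq_subSP (ltnW k_ge2).
have gk_mx2 : gk R q k = mx2 (s k) (- s k.+1) (- s k.-1) (s k) by [].
case: A_eq => ->; [left | right]; apply: invmx_right;
  rewrite gk_mx2 /Qmx ?mul_mx2 mx2_1; congr mx2; try ring; rewrite -[RHS]sk2; ring.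
Qed.

Lemma Lam_generator_bounds (A : 'M[R]_2) : Lam q A -> generator_bounds A.
Proof.
move=> /Lam_mx2[k /andP[k_ge2 k_lt] A_eq].
have s_ge1 j : (0 < j < q)%N -> 1 <= s j.
  case/andP=> j_gt0 j_lt; apply: sq_ge1; first exact: ltnW.
  have : j.+1%:R <= q%:R :> R by rewrite ler_nat.
  have : 1 <= j%:R :> R by rewrite ler1n.
  by rewrite -natr1 => ? ?; apply/andP; split; lra.
have s_ge0 j : (j <= q)%N -> 0 <= s j.
  by move=> jq; apply: sq_ge0; [exact: ltnW | rewrite ler_nat jq andbT].
have sk_ge1 : 1 <= s k by rewrite s_ge1 // (ltnW k_ge2) k_lt.
have sk1_ge1 : 1 <= s k.-1.
  by rewrite s_ge1 // -subn1 subn_gt0 k_ge2 (leq_ltn_trans (leq_subr 1 k) k_lt).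
have sk2_ge0 : 0 <= s k.+1 by rewrite s_ge0.
by case: A_eq => ->; split; rewrite ?mxE //=; first [apply: nonneg_mx2 | lra]; lra.
Qed.

Lemma Lam_det (A : 'M[R]_2) : Lam q A -> \det A ^+ 2 = 1.
Proof.
move=> /Lam_mx2[k /andP[k_ge2 _]].
have det1 : s k * s k - s k.+1 * s k.-1 = 1 by rewrite -expr2 sqr_sq_subSP // ltnW.
case=> ->; rewrite det_mx2; first by rewrite det1 expr1n.
by rewrite -opprB det1 sqrrN expr1n.
Qed.

Lemma Wq_word_bounds n (h : 'M[R]_2) : Wq q n h -> word_bounds n h.
Proof.
move=> [t [<- [t_Lam ->]]]; elim: t t_Lam => [|A t IHt] t_Lam /=.
  exact: word_bounds1.
apply: word_boundsM; first by apply/Lam_generator_bounds/t_Lam; rewrite mem_head.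
by apply: IHt => B B_t; apply: t_Lam; rewrite in_cons B_t orbT.
Qed.

Lemma Wq_det n (h : 'M[R]_2) : Wq q n h -> \det h ^+ 2 = 1.
Proof.
move=> [t [_ [t_Lam ->]]]; elim: t t_Lam => [|A t IHt] t_Lam /=.
  by rewrite det1 expr1n.
rewrite det_mulmx exprMn (Lam_det (t_Lam _ (mem_head _ _))) mul1r.
by apply: IHt => B B_t; apply: t_Lam; rewrite in_cons B_t orbT.
Qed.

End Words.

Section Estimates.
Variable R : realFieldType.

Lemma image_ratio_bound (x eps c d m : R) :
  0 < x -> 0 < eps <= 4 -> 0 <= c -> 0 <= d -> 0 < c * (x - eps / 2) + d ->
  `|eps / ((c * (x - eps / 2) + d) * (c * (x + eps / 2) + d)) * m
    - x * ((c * x + d) ^+ 2)^-1|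
  <= (`|eps * m - x| + eps / x)
     * (eps / ((c * (x - eps / 2) + d) * (c * (x + eps / 2) + d)) / eps).
Proof.
move=> x_gt0 /andP[eps_gt0 eps_le4] c_ge0 d_ge0.
set X := c * x + d; set del := c * eps / 2.
have -> : c * (x - eps / 2) + d = X - del by rewrite /X /del; field.
have -> : c * (x + eps / 2) + d = X + del by rewrite /X /del; field.
move=> P_gt0.
have del_ge0 : 0 <= del by rewrite /del divr_ge0 // mulr_ge0 // ltW.
have Q_gt0 : 0 < X + del by lra.
have X_gt0 : 0 < X by lra.
have PQ_gt0 : 0 < (X - del) * (X + del) by rewrite mulr_gt0.
have -> : eps / ((X - del) * (X + del)) * m - x * (X ^+ 2)^-1 =
    (eps * m - x) / ((X - del) * (X + del)) +
    x * del ^+ 2 / X ^+ 2 / ((X - del) * (X + del)).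
  by field; rewrite !gt_eqF.
have -> : (`|eps * m - x| + eps / x) * (eps / ((X - del) * (X + del)) / eps) =
    `|eps * m - x| / ((X - del) * (X + del)) + eps / x / ((X - del) * (X + del)).
  by field; rewrite !gt_eqF.
apply: le_trans (ler_normD _ _) _.
rewrite normrM normfV (gtr0_norm PQ_gt0) lerD // ger0_norm; last first.
  exact: divr_ge0 (divr_ge0 (mulr_ge0 (ltW x_gt0) (sqr_ge0 _)) (sqr_ge0 _)) (ltW PQ_gt0).
rewrite ler_pM2r ?invr_gt0 // -subr_ge0.
have -> : eps / x - x * del ^+ 2 / X ^+ 2 =
    (eps * X ^+ 2 - (x * del) ^+ 2) / (x * X ^+ 2).
  by field; rewrite !gt_eqF.
apply: divr_ge0; last by rewrite mulr_ge0 ?sqr_ge0 // ltW.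
rewrite subr_ge0.
have -> : (x * del) ^+ 2 = (c * x) ^+ 2 * (eps * (eps / 4)) by rewrite /del; field.
have cx_ge0 : 0 <= c * x by rewrite mulr_ge0 // ltW.
have eps_ge0 := ltW eps_gt0.
rewrite [eps * X ^+ 2]mulrC; apply: ler_pM.
- exact: sqr_ge0.
- by rewrite mulr_ge0 ?divr_ge0.
- by rewrite ler_sqr ?nnegrE ?(ltW X_gt0) // /X lerDl.
- by rewrite ler_piMr //; lra.
Qed.

Lemma truncated_ratio_bound (x lo eps m r i P Q X nn : R) :
  0 < x -> 0 <= lo -> 0 <= eps -> 0 < nn -> lo * nn <= P -> P <= Q -> x * nn <= X ->
  0 <= r -> r <= eps / (P * Q) -> (lo = 0 -> m = 0) -> i = 0 \/ i = 1 ->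
  `|r * m - x * (X ^+ 2)^-1 * i| <= (eps * `|m| / lo ^+ 2 + x^-1) / nn ^+ 2.
Proof.
move=> x_gt0 lo_ge0 eps_ge0 nn_gt0 P_ge P_le_Q X_ge r_ge0 r_le m0 i01.
have xnn_gt0 : 0 < x * nn by rewrite mulr_gt0.
have u_ge0 : 0 <= x * (X ^+ 2)^-1 by rewrite mulr_ge0 ?invr_ge0 ?sqr_ge0 // ltW.
have : `|r * m - x * (X ^+ 2)^-1 * i| <= r * `|m| + x * (X ^+ 2)^-1.
  apply: le_trans (ler_normB _ _) _; rewrite normrM (ger0_norm r_ge0) lerD //.
  by case: i01 => ->; rewrite ?mulr0 ?normr0 ?mulr1 ?ger0_norm.
move/le_trans; apply; rewrite mulrDl lerD //.
  have [lo0 | lo_neq0] := eqVneq lo 0; first by rewrite m0 // normr0 !(mulr0, mul0r).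
  have lo_gt0 : 0 < lo by rewrite lt0r lo_neq0.
  have lonn_gt0 : 0 < lo * nn by rewrite mulr_gt0.
  have P_gt0 : 0 < P := lt_le_trans lonn_gt0 P_ge.
  have Q_gt0 : 0 < Q := lt_le_trans P_gt0 P_le_Q.
  apply: le_trans (_ : eps / (P * Q) * `|m| <= _); first by rewrite ler_wpM2r.
  have -> : eps * `|m| / lo ^+ 2 / nn ^+ 2 = eps / (lo * nn) ^+ 2 * `|m|.
    by rewrite exprMn; field; rewrite !gt_eqF.
  rewrite ler_wpM2r // ler_wpM2l // lef_pV2 ?posrE ?exprn_gt0 ?mulr_gt0 //.
  rewrite expr2; apply: ler_pM; rewrite ?(ltW lonn_gt0) //.
  exact: le_trans P_ge P_le_Q.
have -> : x^-1 / nn ^+ 2 = x * ((x * nn) ^+ 2)^-1.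
  by rewrite exprMn; field; rewrite !gt_eqF.
have X_gt0 : 0 < X := lt_le_trans xnn_gt0 X_ge.
rewrite ler_pM2l // lef_pV2 ?posrE ?exprn_gt0 //.
by rewrite ler_sqr ?nnegrE ?(ltW xnn_gt0) ?(ltW X_gt0).
Qed.
End Estimates.

(* With [x - eps / 2 = 0] the quotient inside [muV] divides by zero, so that
   [muV x eps = ln 0 = 0]. *)
Lemma invr_muV_lo0 (R : realType) (x eps : R) : x - eps / 2 = 0 -> (muV x eps)^-1 = 0.
Proof. by rewrite /muV => ->; rewrite invr0 mulr0 ln0 ?invr0. Qed.

Section WordImage.
Variables (R : realType) (q n : nat) (h : 'M[R]_2) (x eps : R).
Hypotheses (q_ge3 : (3 <= q)%N) (h_word : Wq q n h).
Hypotheses (x_gt0 : 0 < x) (eps_gt0 : 0 < eps).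
Hypotheses (lo_ge0 : 0 <= x - eps / 2) (hi_le1 : x + eps / 2 <= 1).
Local Notation c := (h ord_max ord0).
Local Notation d := (h ord_max ord_max).
Local Notation P := (c * (x - eps / 2) + d).
Local Notation Q := (c * (x + eps / 2) + d).
Local Notation mn := (minr (mob h (x - eps / 2)) (mob h (x + eps / 2))).
Local Notation mx := (maxr (mob h (x - eps / 2)) (mob h (x + eps / 2))).

Let bounds := Wq_word_bounds q_ge3 h_word.
Let c_ge0 : 0 <= c. Proof. by case: bounds. Qed.
Let d_ge1 : 1 <= d. Proof. by case: bounds. Qed.

Lemma Wq_denom_gt0 t : 0 <= t -> 0 < c * t + d.
Proof. by move=> t_ge0; have := mulr_ge0 c_ge0 t_ge0; have := d_ge1; lra. Qed.

Lemma Wq_denom_ge t : 0 <= t <= 1 -> t * n%:R <= c * t + d.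
Proof.
case: bounds => _ _ _ cd_ge /andP[t_ge0 t_le1].
have : 0 <= t * (c + d - n.+1%:R) by rewrite mulr_ge0 // subr_ge0.
have : 0 <= d * (1 - t) by rewrite mulr_ge0 ?subr_ge0 // (le_trans ler01 d_ge1).
rewrite -natr1; nra.
Qed.

Lemma Wq_mob_ge0 t : 0 <= t -> 0 <= mob h t.
Proof.
case: bounds => h_ge0 _ _ _ t_ge0.
by rewrite /mob divr_ge0 ?addr_ge0 ?mulr_ge0 //; exact/ltW/Wq_denom_gt0.
Qed.

Lemma Wq_normdet : `|\det h| = 1.
Proof. by apply/eqP; rewrite -sqr_norm_eq1 (Wq_det q_ge3 h_word). Qed.

Lemma Wq_derive t : 0 <= t -> `|derive1 (mob h) t| = ((c * t + d) ^+ 2)^-1.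
Proof.
move=> t_ge0; have t_denom := Wq_denom_gt0 t_ge0.
by rewrite derive1_mob ?lt0r_neq0 // normrM Wq_normdet mul1r normfV ger0_norm ?sqr_ge0.
Qed.

Let lo_lt_hi : x - eps / 2 < x + eps / 2. Proof. by have := eps_gt0; lra. Qed.
Let eps_le1 : eps <= 1. Proof. by have := lo_ge0; have := hi_le1; lra. Qed.
Let x_le1 : x <= 1. Proof. by have := eps_gt0; have := hi_le1; lra. Qed.

Let denom_gt0 : {in `[x - eps / 2, x + eps / 2], forall t, 0 < c * t + d}.
Proof.
move=> t; rewrite in_itv /= => /andP[lo_t _].
by apply: Wq_denom_gt0; exact: le_trans lo_ge0 lo_t.
Qed.

Let PQ_gt0 : 0 < P * Q.
Proof. by rewrite mulr_gt0 // denom_gt0 // in_itv /= lexx ltW. Qed.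

Lemma Wq_img_Veps : mob_img h (Veps x eps) = ((mob h) @`](x - eps / 2), (x + eps / 2)[)%classic.
Proof.
apply: mob_img_itvoo lo_lt_hi _ denom_gt0.
by rewrite -normr_eq0 Wq_normdet oner_neq0.
Qed.

Lemma Wq_img_Veps_length : mx - mn = eps / (P * Q).
Proof.
rewrite (mob_img_length lo_lt_hi denom_gt0) Wq_normdet mul1r.
by congr (_ / _); field.
Qed.

Lemma Wq_leb_img : leb (mob_img h (Veps x eps)) = (eps / (P * Q))%:E.
Proof.
rewrite Wq_img_Veps leb_itv ?Wq_img_Veps_length // -subr_gt0 Wq_img_Veps_length.
exact: divr_gt0.
Qed.

Lemma Wq_leb_img_itvoc y : mob_img h (Veps x eps) y ->
  exists2 r, leb (mob_img h (Veps x eps) `&` `]0, y]) = r%:E & 0 <= r <= eps / (P * Q).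
Proof.
rewrite Wq_img_Veps /= in_itv /= => /andP[mn_y y_mx].
have hi_ge0 : 0 <= x + eps / 2 := le_trans lo_ge0 (ltW lo_lt_hi).
have mn_ge0 : 0 <= mn by rewrite le_min !Wq_mob_ge0.
exists (y - mn); first by rewrite setI_itvoo_itvoc // leb_itv.
by rewrite subr_ge0 (ltW mn_y) -Wq_img_Veps_length lerD2r ltW.
Qed.

Lemma Wq_ratio_bound : exists r : R, leb (mob_img h (Veps x eps)) = r%:E /\
  `| r / muV x eps - x * `|derive1 (mob h) x| |
    <= (`| eps / muV x eps - x | + eps / x) * (r / eps).
Proof.
exists (eps / (P * Q)); split; first exact: Wq_leb_img.
have eps_bound : 0 < eps <= 4 by rewrite eps_gt0 (le_trans eps_le1) // ler1n.
rewrite (Wq_derive (ltW x_gt0)).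
apply: image_ratio_bound x_gt0 eps_bound c_ge0 (le_trans ler01 d_ge1) _.
by rewrite denom_gt0 // in_itv /= lexx ltW.
Qed.

Lemma Wq_truncated_ratio_bound y : (1 <= n)%N -> mob_img h (Veps x eps) y ->
  exists r : R, leb (mob_img h (Veps x eps) `&` `]0, y]%classic) = r%:E /\
    `| r / muV x eps - x * `|derive1 (mob h) x|
       * (if (0 < mob h x) && (mob h x <= y) then 1 else 0) |
    <= (eps * `|(muV x eps)^-1| / (x - eps / 2) ^+ 2 + x^-1) / (n ^ 2)%:R.
Proof.
move=> n_ge1 /Wq_leb_img_itvoc[r leb_r /andP[r_ge0 r_le]].
exists r; split => //; rewrite (Wq_derive (ltW x_gt0)) natrX.
apply: truncated_ratio_bound r_ge0 r_le (@invr_muV_lo0 _ x eps) _ => //.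
- exact: ltW.
- by rewrite ltr0n.
- by apply: Wq_denom_ge; rewrite lo_ge0 (le_trans (ltW lo_lt_hi) hi_le1).
- by rewrite lerD2r ler_wpM2l // ltW.
- by apply: Wq_denom_ge; rewrite (ltW x_gt0) x_le1.
- by case: ifP; [right | left].
Qed.
End WordImage.

Unset Implicit Arguments.

Theorem lemma4p6 (R : realType) (q : nat) (x eps : R) :
  odd q -> (3 <= q)%N -> 0 < x < 1 -> 0 < eps ->
  Veps x eps `<=` `]0, 1[%classic ->
  (* (i) *)
  (forall (n : nat) (h : 'M[R]_2), Wq q n h ->
     exists r : R, leb (mob_img h (Veps x eps)) = r%:E /\
       `| r / muV x eps - x * `|derive1 (mob h) x| |
         <= (`| eps / muV x eps - x | + eps / x) * (r / eps)) /\
  (* (ii) *)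
  (exists M : R, 0 < M /\
     forall (y : R) (n : nat) (h : 'M[R]_2),
       0 < y <= 1 -> (1 <= n)%N -> Wq q n h -> mob_img h (Veps x eps) y ->
       exists r : R,
         leb (mob_img h (Veps x eps) `&` `]0, y]%classic) = r%:E /\
         `| r / muV x eps
            - x * `|derive1 (mob h) x| * (if (0 < mob h x) && (mob h x <= y) then 1 else 0) |
           <= M / (n ^ 2)%:R).
Proof.
move=> _ q_ge3 /andP[x_gt0 _] eps_gt0 V_sub.
have lo_lt_hi : x - eps / 2 < x + eps / 2 by lra.
have [lo_ge0 hi_le1] := itvoo_subset_bounds lo_lt_hi V_sub.
split=> [n h h_word | ]; first exact: (Wq_ratio_bound q_ge3 h_word x_gt0 eps_gt0 lo_ge0 hi_le1).
exists (eps * `|(muV x eps)^-1| / (x - eps / 2) ^+ 2 + x^-1); split.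
  apply: ltr_wpDl; last by rewrite invr_gt0.
  by rewrite divr_ge0 ?sqr_ge0 // mulr_ge0 // ltW.
move=> y n h _ n_ge1 h_word.
exact: (Wq_truncated_ratio_bound q_ge3 h_word x_gt0 eps_gt0 lo_ge0 hi_le1 n_ge1).
Qed.
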